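(* The intruder model $(\Sigma_{\mathrm{enc}},\vdash)$ is absorbing: for all lists $\vec x=x_1,\dots,x_n$ and $\vec y=y_1,\dots,y_n$ of pairwise distinct names, every finite set of messages $\Gamma$ with $\mathrm{names}(\Gamma)\cap\{y_1,\dots,y_n\}=\emptyset$, and $\Gamma'=\Gamma\{x_1\mapsto y_1,\dots,x_n\mapsto y_n\}$, and every message $M$ with $\mathrm{names}(M)\subseteq\mathrm{names}(\Gamma)$, we have $\Gamma\cup\Gamma'\vdash M$ if and only if $\Gamma\vdash M$.
   Context: Fix a countably infinite set of names. $\Sigma_{\mathrm{enc}}$ consists of the binary constructors $(\cdot,\cdot)$ (pairing), $\{\cdot\}_{\cdot}$ (symmetric encryption), $\mathrm{aenc}(\cdot,\cdot)$ and the unary constructor $\mathrm{pub}(\cdot)$; messages are terms over names and these constructors; $\mathrm{names}(M)$ is the set of names in $M$; substitutions are applied homomorphically. $\Gamma,M$ denotes $\Gamma\cup\{M\}$. The relation $\vdash$ is the least relation between finite sets of messages and messages closed under: (Id) if $M\in\Gamma$ then $\Gamma\vdash M$; (Pub) $\Gamma\vdash K$ implies $\Gamma\vdash\mathrm{pub}(K)$; (P$_L$) $\Gamma,(M,N),M,N\vdash M'$ implies $\Gamma,(M,N)\vdash M'$; (P$_R$) $\Gamma\vdash M$ and $\Gamma\vdash N$ imply $\Gamma\vdash(M,N)$; (S$_L$) $\Gamma,\{M\}_K\vdash K$ and $\Gamma,\{M\}_K,M,K\vdash N$ imply $\Gamma,\{M\}_K\vdash N$; (S$_R$) $\Gamma\vdash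 M$ and $\Gamma\vdash K$ imply $\Gamma\vdash\{M\}_K$; (A$_L$) $\Gamma,\mathrm{aenc}(M,\mathrm{pub}(K))\vdash K$ and $\Gamma,\mathrm{aenc}(M,\mathrm{pub}(K)),M,K\vdash N$ imply $\Gamma,\mathrm{aenc}(M,\mathrm{pub}(K))\vdash N$; (A$_R$) $\Gamma\vdash M$ and $\Gamma\vdash N$ imply $\Gamma\vdash\mathrm{aenc}(M,N)$. *)

From Stdlib Require Import List Arith.
Import ListNotations.

Inductive msg : Type :=
  | Name : nat -> msg
  | Pair : msg -> msg -> msg
  | Senc : msg -> msg -> msg
  | Aenc : msg -> msg -> msg
  | Pub  : msg -> msg.

Fixpoint names (M : msg) : list nat :=
  match M with
  | Name a => [a]
  | Pair M N | Senc M N | Aenc M N => names M ++ names N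
  | Pub K => names K
  end.

Definition names_set (G : list msg) : list nat := flat_map names G.

Fixpoint rename (xs ys : list nat) (a : nat) : nat :=
  match xs, ys with
  | x :: xs', y :: ys' => if Nat.eqb a x then y else rename xs' ys' a
  | _, _ => a
  end.

Fixpoint subst (s : nat -> nat) (M : msg) : msg :=
  match M with
  | Name a => Name (s a)
  | Pair M N => Pair (subst s M) (subst s N)
  | Senc M K => Senc (subst s M) (subst s K)
  | Aenc M N => Aenc (subst s M) (subst s N)
  | Pub K => Pub (subst s K)
  end.

(* A finite set of messages is represented
   by a list, read up to membership only: every rule refers to Gamma only via
   list membership ([In]) and extension by elements, so derivability depends
   only on the underlying set.  "Gamma, P |- ..." (a set containing P) is
   rendered as "In P G" for the set G. *)
Inductive derives : list msg -> msg -> Prop :=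
  | D_Id : forall G M, In M G -> derives G M
  | D_Pub : forall G K, derives G K -> derives G (Pub K)
  | D_PL : forall G M N M', In (Pair M N) G ->
      derives (M :: N :: G) M' -> derives G M'
  | D_PR : forall G M N, derives G M -> derives G N -> derives G (Pair M N)
  | D_SL : forall G M K N, In (Senc M K) G ->
      derives G K -> derives (M :: K :: G) N -> derives G N
  | D_SR : forall G M K, derives G M -> derives G K -> derives G (Senc M K)
  | D_AL : forall G M K N, In (Aenc M (Pub K)) G ->
      derives G K -> derives (M :: K :: G) N -> derives G N
  | D_AR : forall G M N, derives G M -> derives G N -> derives G (Aenc M N).

(* The inverse renaming [ys |-> xs] fixes every name of Gamma and of M
   (they avoid ys) and undoes [xs |-> ys] on the names of Gamma, so it maps a
   derivation from Gamma ∪ Gamma' of M to a derivation from Gamma ∪ Gamma = Gamma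
   of M. *)
From Stdlib Require Import List Arith.

Lemma derives_weaken G G' M : incl G G' -> derives G M -> derives G' M.
Proof.
  intros Hincl D; revert G' Hincl.
  induction D; intros G' Hincl.
  - now apply D_Id, Hincl.
  - now apply D_Pub, IHD.
  - eapply D_PL; [apply Hincl; eassumption|].
    apply IHD; intros z [->|[->|Hz]]; simpl; auto.
  - now apply D_PR; [apply IHD1 | apply IHD2].
  - eapply D_SL; [apply Hincl; eassumption | now apply IHD1 |].
    apply IHD2; intros z [->|[->|Hz]]; simpl; auto.
  - now apply D_SR; [apply IHD1 | apply IHD2].
  - eapply D_AL; [apply Hincl; eassumption | now apply IHD1 |].
    apply IHD2; intros z [->|[->|Hz]]; simpl; auto.
  - now apply D_AR; [apply IHD1 | apply IHD2].
Qed.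

Lemma derives_subst (s : nat -> nat) G M :
  derives G M -> derives (map (subst s) G) (subst s M).
Proof.
  induction 1; simpl in *.
  - now apply D_Id, in_map.
  - now apply D_Pub.
  - eapply D_PL; [exact (in_map (subst s) _ _ H) | exact IHderives].
  - now apply D_PR.
  - eapply D_SL; [exact (in_map (subst s) _ _ H) | exact IHderives1 |].
    exact IHderives2.
  - now apply D_SR.
  - eapply D_AL; [exact (in_map (subst s) _ _ H) | exact IHderives1 |].
    exact IHderives2.
  - now apply D_AR.
Qed.

Lemma subst_subst (f g : nat -> nat) M :
  subst f (subst g M) = subst (fun a => f (g a)) M.
Proof. induction M; simpl; congruence. Qed.

Lemma subst_fix (s : nat -> nat) M :
  (forall a, In a (names M) -> s a = a) -> subst s M = M.
Proof.
  induction M; simpl; intros Hfix;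
    try (rewrite IHM1, IHM2; trivial; intros a Ha; apply Hfix, in_or_app; tauto).
  - now rewrite Hfix; [|left].
  - now rewrite IHM.
Qed.

Lemma in_names_set G N a : In N G -> In a (names N) -> In a (names_set G).
Proof. intros HN Ha; apply in_flat_map; eauto. Qed.

Lemma derives_app_map_subst_retract (s r : nat -> nat) G M :
  (forall a, In a (names_set G) -> r (s a) = a /\ r a = a) ->
  (forall a, In a (names M) -> r a = a) ->
  derives (G ++ map (subst s) G) M -> derives G M.
Proof.
  intros Hretract HrM D.
  apply (derives_subst r) in D.
  rewrite (subst_fix r M HrM), map_app, map_map in D.
  assert (Hfix : forall N, In N G -> subst r N = N).
  { intros N HN; apply subst_fix; intros a Ha.
    now apply Hretract, (in_names_set G N). }
  assert (Hcancel : forall N, In N G -> subst r (subst s N) = N).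
  { intros N HN; rewrite subst_subst; apply subst_fix; intros a Ha.
    now apply Hretract, (in_names_set G N). }
  rewrite (map_ext_in _ _ G Hfix), (map_ext_in _ _ G Hcancel), map_id in D.
  exact (derives_weaken _ _ _ (incl_app (incl_refl G) (incl_refl G)) D).
Qed.

Lemma rename_notin xs ys a : ~ In a xs -> rename xs ys a = a.
Proof.
  revert ys; induction xs as [|x xs IH]; intros [|y ys] Ha; simpl; trivial.
  destruct (Nat.eqb_spec a x) as [->|_].
  - now destruct Ha; left.
  - now apply IH; intros Hin; apply Ha; right.
Qed.

Lemma rename_in_or_id xs ys a : In (rename xs ys a) ys \/ rename xs ys a = a.
Proof.
  revert ys; induction xs as [|x xs IH]; intros [|y ys]; simpl; auto.
  destruct (Nat.eqb a x); [now left; left|].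
  destruct (IH ys); auto.
Qed.

Lemma rename_inverse xs ys a :
  NoDup ys -> ~ In a ys -> rename ys xs (rename xs ys a) = a.
Proof.
  revert ys; induction xs as [|x xs IH]; intros [|y ys] Hnodup Ha; simpl; trivial.
  inversion Hnodup as [|? ? Hy Hnodup']; subst.
  destruct (Nat.eqb_spec a x) as [->|_]; [now rewrite Nat.eqb_refl|].
  destruct (Nat.eqb_spec (rename xs ys a) y) as [Heq|_].
  - exfalso; destruct (rename_in_or_id xs ys a) as [Hin|Hid].
    + apply Hy; rewrite <- Heq; exact Hin.
    + apply Ha; left; rewrite <- Heq; exact Hid.
  - now apply IH; [|intros Hin; apply Ha; right].
Qed.

Theorem lemma3p6 :
  forall (xs ys : list nat) (G : list msg) (M : msg),
    length xs = length ys ->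
    NoDup xs -> NoDup ys ->
    (forall y, In y ys -> ~ In y (names_set G)) ->
    (forall a, In a (names M) -> In a (names_set G)) ->
    (derives (G ++ map (subst (rename xs ys)) G) M <-> derives G M).
Proof.
  intros xs ys G M _ _ Hys Hfresh HM.
  assert (Hnotin : forall a, In a (names_set G) -> ~ In a ys)
    by (intros a Ha Hy; exact (Hfresh a Hy Ha)).
  split.
  - apply (derives_app_map_subst_retract _ (rename ys xs)).
    + intros a Ha; split.
      * now apply rename_inverse, Hnotin.
      * now apply rename_notin, Hnotin.
    + intros a Ha; now apply rename_notin, Hnotin, HM.
  - apply derives_weaken, incl_appl, incl_refl.
Qed.
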